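(* Let $p=(p_1,p_2,\dots)$ be a probability distribution on $\mathbb{N}$ (possibly of finite support) with $p_1\ge p_2\ge\cdots$ and $p_1\le\frac23$. Let $\pi:\mathbb{N}\times\mathbb{N}\to\mathbb{N}$ be any bijection, and let $\pi p$ denote the probability distribution on $\mathbb{N}\times\mathbb{N}$ given by $(\pi p)(j,k)=p_{\pi(j,k)}$. Then the variation distance between $\pi p$ and $p\otimes p$ (where $(p\otimes p)(j,k)=p_jp_k$) is at least $\frac29$.
   Context: The variation distance between distributions $p,q$ on a countable set is $\frac12\sum_x|p(x)-q(x)|$. *)

From mathcomp Require Import all_boot all_order all_algebra.
From mathcomp Require Import all_classical all_reals all_analysis.
Set Implicit Arguments. Unset Strict Implicit. Unset Printing Implicit Defensive.
Import Order.TTheory GRing.Theory Num.Theory.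
Local Open Scope classical_set_scope.
Local Open Scope ring_scope.

Definition vardist (R : realType) (T : choiceType) (p q : T -> R) : \bar R :=
  ((2^-1)%:E * \esum_(x in [set: T]) (`|p x - q x|)%:E)%E.

From mathcomp Require Import all_boot all_order all_algebra.
From mathcomp Require Import all_classical all_reals all_analysis.
From mathcomp Require Import lra.
Set Implicit Arguments. Unset Strict Implicit. Unset Printing Implicit Defensive.
Import Order.TTheory GRing.Theory Num.Theory.
Local Open Scope classical_set_scope.
Local Open Scope ring_scope.

(* Choose m so that the mass t of the m largest atoms lies in [1/3, 2/3]: an
   atom never exceeds max(p_1, mass already taken), and p_1 <= 2/3.  The set
   A = pi^-1 {1..m} has (pi p)(A) = t, while A meets at most m rows and m
   columns, so (p ⊗ p)(A) <= t^2 because no m atoms outweigh the m largest.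
   Since both distributions have mass 1, A and its complement each carry a
   discrepancy of t - t^2, so the variation distance is >= t - t^2 >= 2/9. *)

Section sums.
Variable R : realType.

Lemma ler_sum_subseq (T : eqType) (s s' : seq T) (f : T -> R) :
  uniq s -> uniq s' -> {subset s <= s'} -> (forall x, 0 <= f x) ->
  \sum_(x <- s) f x <= \sum_(x <- s') f x.
Proof.
move=> us us' ss' f0; rewrite [leRHS](bigID (mem s)) /=.
have -> : \sum_(x <- s' | x \in s) f x = \sum_(x <- s) f x.
  rewrite -big_filter; apply/perm_big/uniq_perm; rewrite ?filter_uniq // => x.
  by rewrite mem_filter; case: (boolP (x \in s)) => // /ss' ->.
by rewrite lerDl sumr_ge0.
Qed.

Lemma esumZl (T : choiceType) (I : set T) (a : T -> \bar R) (r : R) :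
  0 <= r -> (forall i, 0 <= a i)%E ->
  \esum_(i in I) (r%:E * a i)%E = (r%:E * \esum_(i in I) a i)%E.
Proof.
move=> r0 a0; rewrite /esum -ereal_supZl //; last first.
  by apply/set0P; exists 0%E, set0; [exact: fsets_set0 | rewrite fsbig_set0].
rewrite image_comp; congr ereal_sup; apply: eq_imagel => X _ /=.
by rewrite ge0_mule_fsumr.
Qed.

Lemma esum_seq (T : choiceType) (s : seq T) (f : T -> R) :
  uniq s -> (forall x, 0 <= f x) ->
  \esum_(x in [set` s]) (f x)%:E = (\sum_(x <- s) f x)%:E.
Proof.
move=> us f0; rewrite -sumEFin fsbig_seq // esum_fset // => x _.
by rewrite lee_fin.
Qed.

Lemma esum_pair_mul (T1 T2 : choiceType) (f : T1 -> R) (g : T2 -> R) (c : R) :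
  (forall i, 0 <= f i) -> (forall j, 0 <= g j) ->
  \esum_(j in [set: T2]) (g j)%:E = c%:E ->
  \esum_(x in [set: T1 * T2]) (f x.1 * g x.2)%:E =
  (c%:E * \esum_(i in [set: T1]) (f i)%:E)%E.
Proof.
move=> f0 g0 gc; have c0 : 0 <= c.
  by rewrite -lee_fin -gc; apply: esum_ge0 => j _; rewrite lee_fin.
have -> : [set: T1 * T2] = [set: T1] `*`` (fun=> [set: T2]).
  by rewrite -setXTT.
rewrite -(esum_esum (a := fun i j => (f i * g j)%:E)); last first.
  by move=> i j _ _; rewrite lee_fin mulr_ge0.
rewrite (eq_esum (b := fun i => (c%:E * (f i)%:E)%E)) ?esumZl // => i _.
rewrite (eq_esum (b := fun j => ((f i)%:E * (g j)%:E)%E)) ?esumZl // gc.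
by rewrite muleC.
Qed.

Lemma esum_bij_comp (T T' : choiceType) (e : T -> T') (a : T' -> \bar R) :
  bijective e -> \esum_(i in [set: T]) a (e i) = \esum_(j in [set: T']) a j.
Proof.
case=> e' eK e'K; rewrite (reindex_esum [set: T] _ e) //; split => //.
  by move=> x y _ _ /(can_inj eK).
by move=> y _; exists (e' y).
Qed.

Lemma esum_le_esum_dist (T : choiceType) (A : set T) (f g : T -> R) :
  (forall x, 0 <= g x) ->
  (\esum_(x in A) (f x)%:E <=
     \esum_(x in A) `|f x - g x|%:E + \esum_(x in A) (g x)%:E)%E.
Proof.
move=> g0; rewrite -esumD => [||x _]; rewrite ?lee_fin //.
by apply: le_esum => x _; rewrite -EFinD lee_fin -lerBlDr ler_norm.
Qed.

Lemma esum_nat_lt_prefix (f : nat -> R) (x : R) : (forall n, 0 <= f n) ->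
  (x%:E < \esum_(n in [set: nat]) (f n)%:E)%E ->
  exists N, x < \sum_(i <- iota 0 N) f i.
Proof.
move=> f0; rewrite /esum => /ereal_sup_gt [_ [X [finX _] <-]].
rewrite fsbig_finite // sumEFin lte_fin; set s := finmap.enum_fset _ => x_lt.
exists (\max_(k <- s) k).+1; apply: (lt_le_trans x_lt).
apply: ler_sum_subseq; rewrite ?iota_uniq ?finmap.fset_uniq // => k ks.
by rewrite mem_iota add0n ltnS (@leq_bigmax_seq _ _ xpredT id k ks).
Qed.

End sums.

Section variation_distance.
Variables (R : realType) (T : choiceType) (q r : T -> R).
Hypotheses (q_ge0 : forall x, 0 <= q x) (r_ge0 : forall x, 0 <= r x).
Hypotheses (q_sum1 : \esum_(x in [set: T]) (q x)%:E = 1%:E)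
           (r_sum1 : \esum_(x in [set: T]) (r x)%:E = 1%:E).

Lemma vardist_ge_mass_gap (A : set T) :
  (\esum_(x in A) (q x)%:E - \esum_(x in A) (r x)%:E <= vardist q r)%E.
Proof.
have esum_splitC (f : T -> R) : (forall x, 0 <= f x) ->
    \esum_(x in [set: T]) (f x)%:E =
    (\esum_(x in A) (f x)%:E + \esum_(x in ~` A) (f x)%:E)%E.
  by move=> f0; rewrite (esumID A) ?setTI // => x _; rewrite lee_fin.
have mass_split (f : T -> R) : (forall x, 0 <= f x) ->
    \esum_(x in [set: T]) (f x)%:E = 1%:E ->
    exists a b, [/\ \esum_(x in A) (f x)%:E = a%:E,
                    \esum_(x in ~` A) (f x)%:E = b%:E & a + b = 1].
  move=> f0; rewrite esum_splitC // => f1.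
  have : (\esum_(x in A) (f x)%:E + \esum_(x in ~` A) (f x)%:E)%E \is a fin_num.
    by rewrite f1.
  rewrite fin_numD => /andP[fA fAc]; exists (fine (\esum_(x in A) (f x)%:E)).
  exists (fine (\esum_(x in ~` A) (f x)%:E)); rewrite !fineK //; split => //.
  by apply: EFin_inj; rewrite EFinD !fineK.
have [a [b [qA qAc ab]]] := mass_split q q_ge0 q_sum1.
have [c [d [rA rAc cd]]] := mass_split r r_ge0 r_sum1.
rewrite /vardist (esum_splitC (fun x => `|q x - r x|)) // qA rA -EFinB.
have gap_in : ((a - c)%:E <= \esum_(x in A) `|q x - r x|%:E)%E.
  by rewrite EFinB leeBlDr // -qA -rA esum_le_esum_dist.
have gap_out : ((a - c)%:E <= \esum_(x in ~` A) `|q x - r x|%:E)%E.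
  have -> : a - c = d - b by lra.
  rewrite EFinB leeBlDr // -qAc -rAc.
  have -> : \esum_(x in ~` A) `|q x - r x|%:E = \esum_(x in ~` A) `|r x - q x|%:E.
    by apply: eq_esum => x _; rewrite distrC.
  exact: esum_le_esum_dist.
have -> : a - c = 2^-1 * ((a - c) + (a - c)) by lra.
rewrite EFinM; apply: lee_wpmul2l; first by rewrite lee_fin invr_ge0.
by rewrite EFinD; apply: leeD.
Qed.

End variation_distance.

Section prefix_sums.
Variables (R : realType) (p : nat -> R).
Hypotheses (p_ge0 : forall n, 0 <= p n) (p_noninc : forall n, p n.+1 <= p n).

Let p_mono : {homo p : n k / (n <= k)%N >-> k <= n}.
Proof. exact/nonincreasing_seqP. Qed.

Lemma sum_iotaS m : \sum_(i <- iota 0 m.+1) p i = \sum_(i <- iota 0 m) p i + p m.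
Proof. by rewrite -addn1 iotaD big_cat /= big_seq1. Qed.

Lemma sum_uniq_le_prefix (s : seq nat) m : uniq s -> (size s <= m)%N ->
  \sum_(i <- s) p i <= \sum_(i <- iota 0 m) p i.
Proof.
elim: m s => [|m IH] s us; first by rewrite leqn0 => /nilP ->; rewrite big_nil.
move=> size_s; rewrite sum_iotaS.
have [/hasP [x xs mx]|/hasPn small] := boolP (has (fun x => m <= x)%N s).
  rewrite (perm_big _ (perm_to_rem xs)) big_cons addrC lerD ?p_mono //.
  by apply: IH; rewrite ?rem_uniq // size_rem //; case: (size s) size_s.
apply: (le_trans (y := \sum_(i <- iota 0 m) p i)); last by rewrite lerDl.
apply: ler_sum_subseq; rewrite ?iota_uniq //.
by move=> x xs; rewrite mem_iota add0n ltnNge small.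
Qed.

Lemma sum_uniq_pair_mul_le (s : seq (nat * nat)) : uniq s ->
  \sum_(x <- s) p x.1 * p x.2 <= (\sum_(i <- iota 0 (size s)) p i) ^+ 2.
Proof.
move=> us; set J := undup (map fst s); set K := undup (map snd s).
have sum_JK : \sum_(x <- [seq (j, k) | j <- J, k <- K]) p x.1 * p x.2 =
    (\sum_(j <- J) p j) * (\sum_(k <- K) p k).
  by rewrite big_allpairs mulr_suml; apply: eq_bigr => j _; rewrite mulr_sumr.
have J_small : (size J <= size s)%N by rewrite -(size_map fst s) size_undup.
have K_small : (size K <= size s)%N by rewrite -(size_map snd s) size_undup.
apply: (le_trans (y := \sum_(x <- [seq (j, k) | j <- J, k <- K]) p x.1 * p x.2)).
  apply: ler_sum_subseq => //; last by move=> x; rewrite mulr_ge0.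
    by rewrite allpairs_uniq ?undup_uniq // => -[? ?] [? ?].
  by move=> [j k] xs; apply: allpairs_f; rewrite mem_undup;
    [exact: (map_f fst xs) | exact: (map_f snd xs)].
by rewrite sum_JK expr2 ler_pM ?sumr_ge0 ?sum_uniq_le_prefix ?undup_uniq.
Qed.

Lemma exists_prefix_mass_mid : p 0%N <= 2 / 3 ->
  (exists N, 3^-1 <= \sum_(i <- iota 0 N) p i) ->
  exists m, 3^-1 <= \sum_(i <- iota 0 m) p i <= 2 / 3.
Proof.
move=> p0_le /ex_minnP [[|k] big_mass minimal].
  by rewrite big_nil in big_mass; lra.
have small_mass : \sum_(i <- iota 0 k) p i < 3^-1.
  by rewrite ltNge; apply/negP => /minimal; rewrite ltnn.
exists k.+1; rewrite big_mass sum_iotaS /=.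
case: k {big_mass minimal} small_mass => [|k] small_mass.
  by rewrite big_nil add0r.
have pk_le : p k.+1 <= p 0%N by apply: p_mono.
have p0_le_mass : p 0%N <= \sum_(i <- iota 0 k.+1) p i.
  by rewrite -[iota _ _]/(0%N :: iota 1 k) big_cons lerDl sumr_ge0.
lra.
Qed.

End prefix_sums.

Theorem lemma3p2 (R : realType) (p : nat -> R) (pi : nat * nat -> nat)
  (p_ge0 : forall n, 0 <= p n)
  (p_sum1 : \esum_(n in [set: nat]) (p n)%:E = 1%:E)
  (p_noninc : forall n, p n.+1 <= p n)
  (p0_le : p 0%N <= 2 / 3)
  (pi_bij : bijective pi) :
  ((2 / 9 : R)%:E <= vardist (fun x : nat * nat => p (pi x))
                        (fun x : nat * nat => (p x.1 * p x.2)%R))%E.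
Proof.
have [m /andP[t_lo t_hi]] : exists m, 3^-1 <= \sum_(i <- iota 0 m) p i <= 2 / 3.
  apply: exists_prefix_mass_mid => //.
  have [|N] := esum_nat_lt_prefix (x := 3^-1) p_ge0.
    by rewrite p_sum1 lte_fin; lra.
  by exists N; apply: ltW.
set t := \sum_(i <- iota 0 m) p i in t_lo t_hi.
have [g _ g_pi] := pi_bij.
pose A := map g (iota 0 m).
have A_uniq : uniq A by rewrite map_inj_uniq ?iota_uniq //; exact: can_inj g_pi.
have q_sum1 : \esum_(x in [set: nat * nat]) (p (pi x))%:E = 1%:E.
  by rewrite (esum_bij_comp (fun n => (p n)%:E) pi_bij).
have r_sum1 : \esum_(x in [set: nat * nat]) (p x.1 * p x.2)%:E = 1%:E.
  by rewrite (esum_pair_mul p_ge0 p_ge0 p_sum1) p_sum1 mule1.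
have qA : \esum_(x in [set` A]) (p (pi x))%:E = t%:E.
  by rewrite esum_seq // big_map; congr EFin; apply: eq_bigr => i _; rewrite g_pi.
have r_ge0 x : 0 <= p x.1 * p x.2 by rewrite mulr_ge0.
have rA : (\esum_(x in [set` A]) (p x.1 * p x.2)%:E <= (t ^+ 2)%:E)%E.
  rewrite esum_seq // lee_fin.
  by have := sum_uniq_pair_mul_le p_ge0 p_noninc A_uniq; rewrite size_map size_iota.
apply: le_trans (vardist_ge_mass_gap (fun=> p_ge0 _) r_ge0 q_sum1 r_sum1 [set` A]).
rewrite qA; apply: le_trans (leeB (lexx t%:E) rA).
by rewrite -EFinB lee_fin; nra.
Qed.
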